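(* Let $\mathrm{M}$ be a loopless matroid on a finite set $E$, $\mathcal{G}$ a building set of its lattice of flats $\mathcal{L}$, $\mathcal{M}$ an atom-free $\mathcal{G}$-compatible modular cut of $\mathcal{L}$, and $e\notin E$. Then \[ \mathrm{Tr}_{\mathcal{M}}(\mathcal{G})=(\mathcal{G}\cup_{\mathcal{M}}e)/e. \] In particular, $\mathrm{Tr}_{\mathcal{M}}(\mathcal{G})$ is a building set of $\mathrm{Tr}_{\mathcal{M}}(\mathrm{M})$.
   Context: Flats ordered by inclusion, $\hat0=\varnothing$, $F\vee G=\operatorname{cl}(F\cup G)$. A building set of a geometric lattice $\mathcal{L}$ is $\mathcal{G}\subseteq\mathcal{L}\setminus\{\hat0\}$ such that for each $F\neq\hat0$ the join map $\prod_{G\in\max\mathcal{G}_{\leqslant F}}[\hat0,G]\to[\hat0,F]$ is a poset isomorphism. A modular cut is an upward-closed set $\mathcal{M}$ of flats with $F\cap G\in\mathcal{M}$ whenever $F,G\in\mathcal{M}$ satisfy $\operatorname{rk}(F\vee G)+\operatorname{rk}(F\cap G)=\operatorname{rk}F+\operatorname{rk}G$; atom-free means it contains no rank-one flat; $\mathcal{G}$-compatible means its minimal elements lie in $\mathcal{G}$. The extension $\mathrm{M}\cup_{\mathcal{M}}e$ on $E\sqcup\{e\}$ has rank $\operatorname{rk}(S)=\operatorname{rk}_{\mathrm{M}}(S)$ and $\operatorname{rk}(S\sqcup\{e\})=\operatorname{rk}_{\mathrm{M}}(S)$ if $\operatorname{cl}_{\mathrm{M}}(S)\in\mathcal{M}$,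 else $\operatorname{rk}_{\mathrm{M}}(S)+1$ ($S\subseteq E$); $\mathcal{G}\cup_{\mathcal{M}}e=\{\operatorname{cl}_{\mathrm{M}\cup_{\mathcal{M}}e}(G):G\in\mathcal{G}\}\sqcup\{\{e\}\}$. The truncation $\mathrm{Tr}_{\mathcal{M}}(\mathrm{M})$ is the matroid on $E$ with rank $\operatorname{rk}_{\mathrm{M}}(S)-1$ if $\operatorname{cl}_{\mathrm{M}}(S)\in\mathcal{M}$ and $\operatorname{rk}_{\mathrm{M}}(S)$ otherwise; it equals the contraction $(\mathrm{M}\cup_{\mathcal{M}}e)/e$, whose flats are the sets $H\setminus\{e\}$ for flats $H\ni e$ of $\mathrm{M}\cup_{\mathcal{M}}e$. $\mathrm{Tr}_{\mathcal{M}}(\mathcal{G})=\mathcal{G}\cap\mathcal{L}(\mathrm{Tr}_{\mathcal{M}}(\mathrm{M}))$. For a building set $\mathcal{G}'$ of $\mathrm{M}\cup_{\mathcal{M}}e$, the contraction is $\mathcal{G}'/e=\{H\setminus\{e\}: H=\operatorname{cl}(G\cup\{e\})\text{ for some }G\in\mathcal{G}',\ H\neq\operatorname{cl}(\{e\})\}$, viewed as a set of flats of $(\mathrm{M}\cup_{\mathcal{M}}e)/e=\mathrm{Tr}_{\mathcal{M}}(\mathrm{M})$. *)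

From mathcomp Require Import all_boot.
Set Implicit Arguments. Unset Strict Implicit. Unset Printing Implicit Defensive.

Definition cl (T : finType) (r : {set T} -> nat) (A : {set T}) : {set T} :=
  [set x | r (x |: A) == r A].

Definition flat (T : finType) (r : {set T} -> nat) (F : {set T}) : bool :=
  cl r F == F.

Section Matroids.
Variable E : finType.
Implicit Types (r : {set E} -> nat) (A B F G H : {set E}) (Gs M : {set {set E}}).

(* Rank-function axioms of a matroid on the ground set E (all of the finType). *)
Definition matroid_rank r : Prop :=
  [/\ forall A, r A <= #|A|,
      forall A B, A \subset B -> r A <= r B &
      forall A B, r (A :|: B) + r (A :&: B) <= r A + r B].

Definition loopless r : Prop := forall x : E, r [set x] = 1.


Definition maxbelow Gs F : {set {set E}} :=
  [set G in Gs | (G \subset F) &&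
     [forall G' in Gs, (G' \subset F) ==> ~~ (G \proper G')]].

Definition family_in r (Mx : {set {set E}}) (h : {set E} -> {set E}) : Prop :=
  forall G, G \in Mx -> flat r (h G) /\ h G \subset G.

Definition family_join r (Mx : {set {set E}}) (h : {set E} -> {set E}) : {set E} :=
  cl r (\bigcup_(G in Mx) h G).

(* Building set of the lattice of flats (bottom = cl set0 = set0 for loopless M):
   for every flat F <> bottom, the join map from the product of the intervals
   [bottom, G], G maximal in Gs below F, to [bottom, F] is a poset isomorphism
   (surjective and an order embedding). *)
Definition building_set r Gs : Prop :=
  (forall G, G \in Gs -> flat r G /\ G != cl r set0) /\
  forall F, flat r F -> F != cl r set0 ->
    let Mx := maxbelow Gs F in
    (forall h, family_in r Mx h -> family_join r Mx h \subset F) /\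
    (forall H, flat r H -> H \subset F ->
        exists h, family_in r Mx h /\ family_join r Mx h = H) /\
    (forall h h', family_in r Mx h -> family_in r Mx h' ->
        (family_join r Mx h \subset family_join r Mx h' <->
         forall G, G \in Mx -> h G \subset h' G)).

Definition modular_cut r M : Prop :=
  [/\ forall F, F \in M -> flat r F,
      forall F G, F \in M -> flat r G -> F \subset G -> G \in M &
      forall F G, F \in M -> G \in M ->
        r (cl r (F :|: G)) + r (F :&: G) = r F + r G -> F :&: G \in M].

Definition atom_free r M : Prop := forall F, F \in M -> r F != 1.

Definition compatible Gs M : Prop :=
  forall F, F \in M -> [forall G in M, ~~ (G \proper F)] -> F \in Gs.

Definition trunc r M (S : {set E}) : nat := r S - (cl r S \in M).

Definition trunc_set r M Gs : {set {set E}} := [set G in Gs | flat (trunc r M) G].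

(* Principal extension M ∪_M e on option E; None plays the role of e. *)
Definition ext r M (S : {set option E}) : nat :=
  let S' := [set x | Some x \in S] in
  r S' + ((None \in S) && (cl r S' \notin M)).

Definition ext_set r M Gs : {set {set option E}} :=
  [set cl (ext r M) (Some @: G) | G : {set E} in Gs] :|: [set [set None]].

(* Contraction G'/e of a building set of the extension, as sets of flats of
   (M ∪_M e)/e = Tr_M(M), i.e. subsets of E. *)
Definition contr_set (r' : {set option E} -> nat) (Gs' : {set {set option E}})
  : {set {set E}} :=
  [set [set x | Some x \in H] | H : {set option E} in
     [set cl r' (None |: G) | G : {set option E} in Gs'] & H != cl r' [set None]].

End Matroids.

(* For a nonempty flat F and a building set Gs, the join of a family (h G) over the
   maximal elements G of Gs below F is just the union of the h G, and adding a
   point x of G to that union changes only its G-component. Hence, if each h G is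
   closed in G for the truncation, so is the union: otherwise the modular cut would
   contain the closure of x and the union, hence (by compatibility) one of its
   components, which can only be the enlarged G-component, and then x would lie in
   the truncated closure of h G. In particular these maximal elements are flats of
   Tr_M(M), so they are also the maximal elements of Tr_M(Gs), and the product
   decomposition of [0, F] restricts to flats of the truncation. For the identity
   of sets, closing G with e in the extension and then contracting e amounts to
   closing G in the truncation; that closure is again in Gs, because the maximal
   element of Gs containing G below it is a flat of the truncation and hence equals
   it. *)

From mathcomp Require Import all_boot zify.
Set Implicit Arguments. Unset Strict Implicit. Unset Printing Implicit Defensive.

Section MatroidClosure.
Variables (T : finType) (rho : {set T} -> nat).
Hypothesis rho_matroid : matroid_rank rho.
Implicit Types (A B F G X : {set T}) (x : T).

Lemma rank_card A : rho A <= #|A|. Proof. by case: rho_matroid. Qed.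

Lemma rank_mono A B : A \subset B -> rho A <= rho B.
Proof. by case: rho_matroid => _ + _; apply. Qed.

Lemma rank_submod A B : rho (A :|: B) + rho (A :&: B) <= rho A + rho B.
Proof. by case: rho_matroid. Qed.

Lemma rank0 : rho set0 = 0.
Proof. by apply/eqP; rewrite -leqn0 -(cards0 T) rank_card. Qed.

Lemma rank_leU1 A x : rho A <= rho (x |: A).
Proof. exact/rank_mono/subsetU1. Qed.

Lemma rankU1_leS A x : rho (x |: A) <= (rho A).+1.
Proof. have := rank_submod [set x] A; have := rank_card [set x]; rewrite cards1; lia. Qed.

Lemma in_cl A x : (x \in cl rho A) = (rho (x |: A) == rho A).
Proof. by rewrite inE. Qed.

Lemma sub_cl A : A \subset cl rho A.
Proof. by apply/subsetP => x xA; rewrite in_cl (setUidPr _) ?sub1set. Qed.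

Lemma cl_mono A B : A \subset B -> cl rho A \subset cl rho B.
Proof.
move=> sAB; apply/subsetP => x; rewrite !in_cl => /eqP rxA.
have := rank_submod B (x |: A); rewrite setUCA (setUidPl sAB).
have := @rank_mono A (B :&: (x |: A)); rewrite subsetI sAB subsetU1 => /(_ isT).
have := rank_leU1 B x; lia.
Qed.

Lemma rank_clU A X : X \subset cl rho A -> rho (A :|: X) = rho A.
Proof.
rewrite -(set_enum X); elim: (enum X) => [|x s IHs] /=.
  by move=> _; congr rho; apply/setP => y; rewrite !inE orbF.
have -> : [set y in x :: s] = x |: [set y in s] by apply/setP => y; rewrite !inE.
rewrite subUset sub1set setUCA => /andP[xA /IHs rAs]; apply/eqP; rewrite -rAs -in_cl.
by apply: subsetP xA; apply/cl_mono/subsetUl.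
Qed.

Lemma rank_cl A : rho (cl rho A) = rho A.
Proof. by rewrite -{1}(setUidPr (sub_cl A)) rank_clU. Qed.

Lemma cl_id A : cl rho (cl rho A) = cl rho A.
Proof.
apply/eqP; rewrite eqEsubset sub_cl andbT; apply/subsetP => x.
rewrite !in_cl rank_cl => /eqP e; rewrite eqn_leq rank_leU1 andbT -e.
by rewrite rank_mono ?setUS ?sub_cl.
Qed.

Lemma flat_cl A : flat rho (cl rho A). Proof. exact/eqP/cl_id. Qed.

Lemma cl_flat F : flat rho F -> cl rho F = F. Proof. by move/eqP. Qed.

Lemma cl_sub_flat A F : flat rho F -> A \subset F -> cl rho A \subset F.
Proof. by move=> /cl_flat {2}<-; apply: cl_mono. Qed.

Lemma sub_cl_rank_eq A B : A \subset B -> rho A = rho B -> B \subset cl rho A.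
Proof.
move=> sAB rAB; apply/subsetP => y yB; rewrite in_cl eqn_leq rank_leU1 andbT rAB.
by rewrite rank_mono // subUset sub1set yB.
Qed.

Lemma cl_rank_eq A B : A \subset B -> rho A = rho B -> cl rho A = cl rho B.
Proof.
move=> sAB rAB; apply/eqP; rewrite eqEsubset cl_mono //=.
by rewrite -(cl_id A) cl_mono // sub_cl_rank_eq.
Qed.

Lemma eq_cl A B : A \subset cl rho B -> B \subset cl rho A -> cl rho A = cl rho B.
Proof.
move=> sAB sBA; apply/eqP; rewrite eqEsubset.
by rewrite -{1}(cl_id B) -{2}(cl_id A) !cl_mono.
Qed.

Lemma flatI F G : flat rho F -> flat rho G -> flat rho (F :&: G).
Proof.
move=> fF fG; rewrite /flat eqEsubset sub_cl andbT subsetI.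
by rewrite !cl_sub_flat ?subsetIl ?subsetIr.
Qed.

Lemma rank_flatU1 F x : flat rho F -> x \notin F -> rho (x |: F) = (rho F).+1.
Proof.
move=> /cl_flat {1}<-; rewrite in_cl => /eqP.
by have := rankU1_leS F x; have := rank_leU1 F x; lia.
Qed.

End MatroidClosure.

Lemma loopless_cl0 (T : finType) (rho : {set T} -> nat) :
  matroid_rank rho -> loopless rho -> cl rho set0 = set0.
Proof.
move=> rho_matroid rho_loopless; apply/setP => x.
by rewrite in_cl setU0 rho_loopless rank0 ?inE.
Qed.

Lemma loopless_cl1 (T : finType) (rho : {set T} -> nat) x y :
  matroid_rank rho -> loopless rho -> y \in cl rho [set x] -> cl rho [set y] = cl rho [set x].
Proof.
move=> rho_matroid rho_loopless yx; rewrite -[RHS](cl_id rho_matroid).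
by apply: cl_rank_eq; rewrite ?sub1set ?rank_cl ?rho_loopless.
Qed.

Section MaximalElements.
Variables (T : finType) (Hs : {set {set T}}).
Implicit Types (F G : {set T}).

Lemma maxbelowP F G : reflect
  [/\ G \in Hs, G \subset F & forall G', G' \in Hs -> G' \subset F -> ~~ (G \proper G')]
  (G \in maxbelow Hs F).
Proof.
rewrite inE; apply: (iffP and3P) => [[-> -> /forall_inP maxG]|[-> -> maxG]].
  by split=> // G' G'Hs; apply/implyP/maxG.
by split=> //; apply/forall_inP => G' G'Hs; apply/implyP/maxG.
Qed.

Lemma maxbelow_mem F G : G \in maxbelow Hs F -> G \in Hs.
Proof. by case/maxbelowP. Qed.

Lemma maxbelow_sub F G : G \in maxbelow Hs F -> G \subset F.
Proof. by case/maxbelowP. Qed.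

Lemma maxbelow_exists F G : G \in Hs -> G \subset F ->
  exists2 G', G' \in maxbelow Hs F & G \subset G'.
Proof.
move=> GHs GF.
have [G' /maxsetP[/andP[G'Hs G'F] maxG'] GG'] :=
  @maxset_exists _ [pred X | (X \in Hs) && (X \subset F)] G (introT andP (conj GHs GF)).
exists G' => //; apply/maxbelowP; split=> // G'' G''Hs G''F.
apply/negP => /properP[G'G'' [z zG'' zG']].
by move: zG'; rewrite -(maxG' G'') ?inE ?G''Hs ?G''F ?zG''.
Qed.

End MaximalElements.

Local Notation unsome S := [set x | Some x \in S].

Section Truncation.
Variables (E : finType) (r : {set E} -> nat) (M : {set {set E}}).
Hypotheses (r_matroid : matroid_rank r) (r_loopless : loopless r).
Hypotheses (M_cut : modular_cut r M) (M_neq0 : set0 \notin M).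
Implicit Types (A B F G K : {set E}) (x : E).

Local Notation tr := (trunc r M).

Lemma modular_cut_flat F : F \in M -> flat r F.
Proof. by case: M_cut => + _ _; apply. Qed.

Lemma modular_cut_up F G : F \in M -> flat r G -> F \subset G -> G \in M.
Proof. by case: M_cut => _ + _; apply. Qed.

Lemma modular_cut_cl_up A B : cl r A \in M -> A \subset B -> cl r B \in M.
Proof. by move=> AM sAB; apply: modular_cut_up AM (flat_cl _ _) (cl_mono _ sAB). Qed.

Lemma truncE A : tr A + (cl r A \in M) = r A.
Proof.
rewrite /trunc; case AM: (cl r A \in M); last by rewrite subn0 addn0.
have [x xA] : exists x, x \in cl r A.
  by apply/set0Pn; apply: contraNneq M_neq0 => <-.
have := rank_mono r_matroid (_ : [set x] \subset cl r A).
rewrite sub1set (r_loopless x) rank_cl // => /(_ xA); lia.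
Qed.

Lemma modular_cut_clI A B : cl r A \in M -> cl r B \in M ->
  r (A :|: B) + r (A :&: B) = r A + r B -> cl r (A :&: B) \in M.
Proof.
set F := cl r A; set G := cl r B => FM GM modAB.
have rFG : r (F :|: G) = r (A :|: B).
  apply/eqP; rewrite eqn_leq [r (A :|: B) <= _]rank_mono ?setUSS ?sub_cl // andbT.
  by rewrite -(rank_cl r_matroid (A :|: B)) rank_mono // subUset !cl_mono ?subsetUl ?subsetUr.
have sI : A :&: B \subset F :&: G by rewrite setISS ?sub_cl.
have rI : r (F :&: G) = r (A :&: B).
  have := rank_submod r_matroid F G; have := rank_mono r_matroid sI.
  by rewrite rFG !rank_cl //; lia.
rewrite (cl_rank_eq r_matroid sI) ?rI // cl_flat ?flatI ?flat_cl //.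
by case: M_cut => _ _; apply => //; rewrite rank_cl // rFG rI !rank_cl.
Qed.

Lemma trunc_le A : tr A <= r A. Proof. exact: leq_subr. Qed.

Lemma trunc_matroid : matroid_rank tr.
Proof.
split=> [A | A B sAB | A B].
- exact: leq_trans (trunc_le A) (rank_card r_matroid A).
- have := truncE A; have := truncE B; have := rank_mono r_matroid sAB.
  case AM: (cl r A \in M); case BM: (cl r B \in M) => /=; try lia.
  have : r A != r B by apply: contraFneq AM => /(cl_rank_eq r_matroid sAB) ->.
  lia.
- have := truncE A; have := truncE B; have := truncE (A :|: B); have := truncE (A :&: B).
  have := trunc_le (A :&: B); have := rank_submod r_matroid A B.
  case AM: (cl r A \in M); case BM: (cl r B \in M) => /=; last by lia.
  + rewrite (modular_cut_cl_up AM (subsetUl A B)).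
    case IM: (cl r (A :&: B) \in M); first by lia.
    have : r (A :|: B) + r (A :&: B) != r A + r B.
      by apply: contraFneq IM; apply: modular_cut_clI.
    lia.
  + by rewrite (modular_cut_cl_up AM (subsetUl A B)); lia.
  + by rewrite (modular_cut_cl_up BM (subsetUr A B)); lia.
Qed.

Lemma trunc_loopless : atom_free r M -> loopless tr.
Proof.
move=> M_atom_free x; have := truncE [set x]; rewrite r_loopless.
case xM: (cl r [set x] \in M); last by rewrite addn0.
by have := M_atom_free _ xM; rewrite rank_cl // r_loopless.
Qed.

Lemma cl_sub_cl_trunc A : cl r A \subset cl tr A.
Proof.
apply/subsetP => x; rewrite !in_cl => /eqP rxA.
have clxA : cl r (x |: A) = cl r A by rewrite (cl_rank_eq r_matroid (subsetU1 x A)).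
by have := truncE A; have := truncE (x |: A); rewrite clxA rxA; lia.
Qed.

Lemma trunc_flat_flat F : flat tr F -> flat r F.
Proof.
move=> /cl_flat ftF; rewrite /flat eqEsubset sub_cl andbT.
by rewrite -{2}ftF cl_sub_cl_trunc.
Qed.

Lemma in_cl_trunc K x : flat r K -> x \notin K ->
  (x \in cl tr K) = (K \notin M) && (cl r (x |: K) \in M).
Proof.
move=> fK xK; rewrite in_cl.
have := truncE K; have := truncE (x |: K); rewrite (cl_flat fK) (rank_flatU1 r_matroid fK xK).
by case: (K \in M); case: (cl r (x |: K) \in M) => /=; lia.
Qed.

Lemma unsome_cl_ext_None (S : {set option E}) :
  unsome (cl (ext r M) (None |: S)) = cl tr (unsome S).
Proof.
apply/setP => x; rewrite !inE /ext.
have -> : unsome (Some x |: (None |: S)) = x |: unsome S by apply/setP => y; rewrite !inE.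
have -> : unsome (None |: S) = unsome S by apply/setP => y; rewrite !inE.
rewrite !inE eqxx orbT /=.
have := truncE (unsome S); have := truncE (x |: unsome S).
by case: (cl r (unsome S) \in M); case: (cl r (x |: unsome S) \in M) => /= ? ?;
  apply/eqP/eqP; lia.
Qed.

Lemma unsome_cl_ext_Some G : unsome (cl (ext r M) (Some @: G)) = cl r G.
Proof.
have unsomeK A : unsome (Some @: A) = A.
  by apply/setP => y; rewrite inE (mem_imset _ _ (@Some_inj _)).
have None_Some A : (None \in Some @: A) = false by apply/imsetP => -[].
apply/setP => x; rewrite !inE /ext -imsetU1.
by rewrite !unsomeK !None_Some !addn0.
Qed.

End Truncation.

Section BuildingSet.
Variables (E : finType) (r : {set E} -> nat) (Gs : {set {set E}}).
Hypotheses (r_matroid : matroid_rank r) (r_loopless : loopless r).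
Hypothesis Gs_building : building_set r Gs.
Implicit Types (F G H K : {set E}) (x : E) (h : {set E} -> {set E}).

Lemma building_set_flat G : G \in Gs -> flat r G.
Proof. by case: Gs_building => + _ => /[apply] -[]. Qed.

Lemma building_set_neq0 G : G \in Gs -> G != set0.
Proof. by case: Gs_building => + _ => /[apply] -[]; rewrite loopless_cl0. Qed.

Section MaximalBelow.
Variable F : {set E}.
Hypotheses (F_flat : flat r F) (F_neq0 : F != set0).
Local Notation Mx := (maxbelow Gs F).

Let F_iso := proj2 Gs_building F F_flat ltac:(by rewrite loopless_cl0).

Lemma maxbelow_cover x : x \in F -> exists2 G, G \in Mx & x \in G.
Proof.
move=> xF; apply/exists_inP; apply: contraT => noG.
have [_ [join_onto _]] := F_iso.
have xx : x \in cl r [set x] by rewrite (subsetP (sub_cl _ _)) ?set11.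
have clxF : cl r [set x] \subset F by rewrite cl_sub_flat ?sub1set.
have [h [hMx hx]] := join_onto _ (flat_cl r_matroid _) clxF.
suff h0 : \bigcup_(G in Mx) h G = set0.
  by move: xx; rewrite -hx /family_join h0 loopless_cl0 ?inE.
apply/eqP; rewrite -subset0; apply/bigcupsP => G GMx; apply/subsetP => z zhG.
have [fhG hGG] := hMx G GMx.
have zx : z \in cl r [set x].
  by rewrite -hx; apply/(subsetP (sub_cl _ _))/bigcupP; exists G.
have xhG : x \in h G.
  by rewrite -(loopless_cl1 _ _ zx) // in xx; apply: subsetP xx; rewrite cl_sub_flat ?sub1set.
by case/exists_inP: noG; exists G; last exact: subsetP hGG _ xhG.
Qed.

Lemma bigcup_maxbelowI H : H \subset F -> \bigcup_(G in Mx) (H :&: G) = H.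
Proof.
move=> HF; apply/eqP; rewrite eqEsubset; apply/andP; split.
  by apply/bigcupsP => G _; apply: subsetIl.
apply/subsetP => y yH; have [G GMx yG] := maxbelow_cover (subsetP HF y yH).
by apply/bigcupP; exists G; rewrite // inE yH.
Qed.

Lemma family_join_meet h G : family_in r Mx h -> G \in Mx ->
  family_join r Mx h :&: G = h G.
Proof.
move=> hMx GMx; have [join_sub [_ join_mono]] := F_iso.
set K := family_join r Mx h.
have KMx : family_in r Mx (fun G' => K :&: G').
  move=> G' G'Mx; rewrite subsetIr; split=> //.
  by rewrite flatI ?flat_cl ?building_set_flat ?(maxbelow_mem G'Mx).
have joinK : family_join r Mx (fun G' => K :&: G') = K.
  by rewrite /family_join bigcup_maxbelowI ?join_sub // cl_flat ?flat_cl.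
apply/eqP; rewrite eqEsubset; apply/andP; split.
  by apply: (join_mono _ _ KMx hMx).1 => //; rewrite joinK.
rewrite subsetI (hMx G GMx).2 andbT.
exact: subset_trans (bigcup_sup _ GMx) (sub_cl _ _).
Qed.

Lemma family_join_bigcup h : family_in r Mx h ->
  family_join r Mx h = \bigcup_(G in Mx) h G.
Proof.
move=> hMx; have [join_sub _] := F_iso.
apply/eqP; rewrite eqEsubset sub_cl andbT; apply/subsetP => y yK.
have [G GMx yG] := maxbelow_cover (subsetP (join_sub h hMx) y yK).
by apply/bigcupP; exists G; rewrite // -(family_join_meet hMx GMx) inE yK.
Qed.

Lemma cl_setU1_bigcup_meet h G x G' : family_in r Mx h -> G \in Mx -> x \in G ->
  G' \in Mx ->
  cl r (x |: \bigcup_(G'' in Mx) h G'') :&: G' =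
    if G' == G then cl r (x |: h G) else h G'.
Proof.
move=> hMx GMx xG G'Mx.
pose hx G'' := if G'' == G then cl r (x |: h G) else h G''.
have hhx G'' : h G'' \subset hx G''.
  by rewrite /hx; case: eqP => [->|//]; apply: subset_trans _ (sub_cl _ _); apply: subsetU1.
have hxMx : family_in r Mx hx.
  move=> G'' G''Mx; rewrite /hx; case: eqP => [->|_]; last exact: hMx.
  split; first exact: flat_cl.
  rewrite cl_sub_flat ?building_set_flat ?(maxbelow_mem GMx) //.
  by rewrite subUset sub1set xG (hMx G GMx).2.
transitivity (family_join r Mx hx :&: G'); last exact: family_join_meet.
congr (_ :&: _); apply: eq_cl => //.
  apply: subset_trans _ (sub_cl _ _); rewrite subUset sub1set; apply/andP; split.
    apply/bigcupP; exists G; rewrite // /hx eqxx.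
    by rewrite (subsetP (sub_cl _ _)) ?setU11.
  by apply/bigcupsP => G'' G''Mx; apply: subset_trans (hhx G'') (bigcup_sup _ G''Mx).
apply/bigcupsP => G'' G''Mx; rewrite /hx; case: eqP => _.
  by rewrite cl_mono // setUS // (bigcup_sup _ GMx).
by apply: subset_trans _ (sub_cl _ _); apply: subset_trans (subsetU1 x _); apply: bigcup_sup.
Qed.

End MaximalBelow.

Variable M : {set {set E}}.
Hypotheses (M_cut : modular_cut r M) (M_atom_free : atom_free r M).
Hypothesis M_compat : compatible Gs M.

Local Notation tr := (trunc r M).

Lemma compatible_cut_neq0 : set0 \notin M.
Proof.
apply/negP => M0; suff /building_set_neq0 : set0 \in Gs by rewrite eqxx.
by apply: M_compat M0 _; apply/forall_inP => G _; rewrite properE sub0set andbF.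
Qed.

Let M_neq0 := compatible_cut_neq0.
Let tr_matroid := trunc_matroid r_matroid r_loopless M_cut M_neq0.
Let tr_loopless := trunc_loopless r_matroid r_loopless M_neq0 M_atom_free.

Lemma modular_cut_meet_maxbelow F K : K \in M -> K \subset F ->
  exists2 G, G \in maxbelow Gs F & K :&: G \in M.
Proof.
move=> KM KF.
have [X /minsetP[/andP[XM XK] minX] _] :=
  @minset_exists _ [pred X | (X \in M) && (X \subset K)] K (introT andP (conj KM (subxx K))).
have XGs : X \in Gs.
  apply: M_compat XM _; apply/forall_inP => G GM; apply/negP => /properP[GX [z zX zG]].
  by move: zG; rewrite (minX G) ?zX // inE GM (subset_trans GX XK).
have [G GMx XG] := maxbelow_exists XGs (subset_trans XK KF).
exists G => //; apply: (modular_cut_up M_cut XM); last by rewrite subsetI XK XG.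
by rewrite flatI ?(modular_cut_flat M_cut KM) ?building_set_flat ?(maxbelow_mem GMx).
Qed.

Section TruncatedFlat.
Variable F : {set E}.
Hypotheses (F_trflat : flat tr F) (F_neq0 : F != set0).
Local Notation Mx := (maxbelow Gs F).

Let F_flat := trunc_flat_flat r_matroid r_loopless M_neq0 F_trflat.

Lemma trunc_flat_bigcup h :
  (forall G, G \in Mx -> [/\ flat r (h G), h G \subset G & G :&: cl tr (h G) \subset h G]) ->
  flat tr (\bigcup_(G in Mx) h G).
Proof.
move=> hMx_tr; have hMx : family_in r Mx h by move=> G /hMx_tr[].
set K := \bigcup_(G in Mx) h G.
have fK : flat r K by rewrite /K -(family_join_bigcup F_flat F_neq0 hMx) flat_cl.
have hK G : G \in Mx -> h G \subset K by apply: bigcup_sup.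
have KF : K \subset F.
  by apply/bigcupsP => G GMx; apply: subset_trans (hMx G GMx).2 (maxbelow_sub GMx).
rewrite /flat eqEsubset sub_cl andbT; apply/subsetP => x xK; apply: contraT => xnK.
have [G GMx xG] : exists2 G, G \in Mx & x \in G.
  apply: (maxbelow_cover F_flat F_neq0); apply: subsetP xK.
  by rewrite -(cl_flat F_trflat) cl_mono.
move: xK; rewrite in_cl_trunc // => /andP[KnM xKM].
have hGnM G' : G' \in Mx -> h G' \notin M.
  by move=> G'Mx; apply: contra KnM => /(modular_cut_up M_cut); apply=> //; apply: hK.
have xKF : cl r (x |: K) \subset F.
  by rewrite cl_sub_flat // subUset sub1set KF (subsetP (maxbelow_sub GMx)).
have [G' G'Mx] := modular_cut_meet_maxbelow xKM xKF.
rewrite (cl_setU1_bigcup_meet F_flat F_neq0 hMx GMx xG G'Mx).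
case: eqP => [_ xhGM|_]; last by rewrite (negbTE (hGnM G' G'Mx)).
have xnhG : x \notin h G by apply: contra xnK; apply/subsetP/hK.
have [fhG _ closed_hG] := hMx_tr G GMx.
have : x \in G :&: cl tr (h G) by rewrite inE xG in_cl_trunc // hGnM.
by move/(subsetP closed_hG); rewrite (negbTE xnhG).
Qed.

Lemma maxbelow_trunc_flat G : G \in Mx -> flat tr G.
Proof.
move=> GMx; suff <- : \bigcup_(G' in Mx) (if G' == G then G else set0) = G.
  apply: trunc_flat_bigcup => G' G'Mx; case: eqP => [->|_].
    by split; rewrite ?subsetIl ?building_set_flat ?(maxbelow_mem GMx).
  by split; rewrite /flat ?sub0set ?(loopless_cl0 tr_matroid tr_loopless) ?setI0 ?loopless_cl0.
by rewrite (bigD1 G) //= eqxx big1 ?setU0 // => G' /andP[_ /negPf ->].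
Qed.

Lemma maxbelow_trunc_set : maxbelow (trunc_set r M Gs) F = Mx.
Proof.
apply/setP => G; apply/maxbelowP/maxbelowP => [[]|[GGs GF Gmax]].
  rewrite inE => /andP[GGs _] GF Gmax.
  have [G' G'Mx GG'] := maxbelow_exists GGs GF.
  have G'tr : G' \in trunc_set r M Gs by rewrite inE (maxbelow_mem G'Mx) maxbelow_trunc_flat.
  have := Gmax G' G'tr (maxbelow_sub G'Mx); rewrite properE GG' negbK => G'G.
  suff -> : G = G' by case/maxbelowP: G'Mx.
  by apply/eqP; rewrite eqEsubset GG'.
split=> [|//|G']; first by rewrite inE GGs maxbelow_trunc_flat //; apply/maxbelowP.
by rewrite inE => /andP[G'Gs _]; apply: Gmax.
Qed.

End TruncatedFlat.

Lemma trunc_building_set : building_set tr (trunc_set r M Gs).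
Proof.
rewrite /building_set (loopless_cl0 tr_matroid tr_loopless); split.
  by move=> G; rewrite inE => /andP[GGs ->]; rewrite building_set_neq0.
move=> F ftF F_neq0 /=; rewrite maxbelow_trunc_set //.
have fF := trunc_flat_flat r_matroid r_loopless M_neq0 ftF.
have tr_family h : family_in tr (maxbelow Gs F) h ->
    family_in r (maxbelow Gs F) h /\
    family_join tr (maxbelow Gs F) h = \bigcup_(G in maxbelow Gs F) h G.
  move=> hMx; have hrMx : family_in r (maxbelow Gs F) h.
    by move=> G /hMx[/(trunc_flat_flat r_matroid r_loopless M_neq0)].
  split=> //; apply: cl_flat; apply: trunc_flat_bigcup => // G GMx.
  by have [fhG hGG] := hMx G GMx; rewrite (cl_flat fhG) subsetIr; case: (hrMx G GMx).
split; [|split].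
- move=> h /tr_family[hMx ->]; apply/bigcupsP => G GMx.
  exact: subset_trans (hMx G GMx).2 (maxbelow_sub GMx).
- move=> H ftH HF; exists (fun G => H :&: G); split.
    by move=> G GMx; rewrite subsetIr (flatI tr_matroid ftH (maxbelow_trunc_flat ftF F_neq0 GMx)).
  by rewrite /family_join bigcup_maxbelowI ?cl_flat.
move=> h h' /tr_family[hMx ->] /tr_family[h'Mx ->].
split=> [sub G GMx | le].
  rewrite -(family_join_meet fF F_neq0 h'Mx GMx) family_join_bigcup // subsetI (hMx G GMx).2 andbT.
  exact: subset_trans (bigcup_sup _ GMx) sub.
by apply/bigcupsP => G GMx; apply: subset_trans (le G GMx) (bigcup_sup _ GMx).
Qed.

Lemma cl_trunc_in_trunc_set G : G \in Gs -> cl tr G \in trunc_set r M Gs.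
Proof.
move=> GGs; have ftF := flat_cl tr_matroid G.
have GF := sub_cl tr G.
have F_neq0 : cl tr G != set0.
  by apply: contraNneq (building_set_neq0 GGs) => F0; rewrite -subset0 -F0.
have [G' G'Mx GG'] := maxbelow_exists GGs GF.
have ftG' := maxbelow_trunc_flat ftF F_neq0 G'Mx.
suff -> : cl tr G = G' by rewrite inE (maxbelow_mem G'Mx) ftG'.
by apply/eqP; rewrite eqEsubset (maxbelow_sub G'Mx) andbT cl_sub_flat.
Qed.

Lemma trunc_set_contr : trunc_set r M Gs = contr_set (ext r M) (ext_set r M Gs).
Proof.
have unsome_None : unsome (cl (ext r M) [set None]) = set0.
  rewrite -[[set None]]setU0 unsome_cl_ext_None //.
  by rewrite (_ : unsome set0 = set0) ?(loopless_cl0 tr_matroid) //; apply/setP => y; rewrite !inE.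
have unsome_Gs G : G \in Gs ->
    unsome (cl (ext r M) (None |: cl (ext r M) (Some @: G))) = cl tr G.
  by move=> GGs; rewrite unsome_cl_ext_None // unsome_cl_ext_Some (cl_flat (building_set_flat GGs)).
apply/setP => X; apply/idP/imsetP => [|[H]].
  rewrite inE => /andP[XGs ftX].
  exists (cl (ext r M) (None |: cl (ext r M) (Some @: X))); last by rewrite unsome_Gs ?cl_flat.
  rewrite inE; apply/andP; split.
    apply/imsetP; exists (cl (ext r M) (Some @: X)) => //.
    by apply/setUP; left; apply/imsetP; exists X.
  apply: contraNneq (building_set_neq0 XGs) => /(congr1 (fun S : {set option E} => unsome S)).
  by rewrite unsome_None unsome_Gs // (cl_flat ftX) => ->.
rewrite inE => /andP[/imsetP[_ /setUP[/imsetP[G GGs ->]|/set1P ->] ->] HnNone] ->.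
  by rewrite unsome_Gs ?cl_trunc_in_trunc_set.
by rewrite setUid eqxx in HnNone.
Qed.

End BuildingSet.

Unset Implicit Arguments.

Theorem lemma2p33 (E : finType) (r : {set E} -> nat)
  (hr : matroid_rank r) (hl : loopless r)
  (Gs : {set {set E}}) (hG : building_set r Gs)
  (M : {set {set E}}) (hM : modular_cut r M) (haf : atom_free r M)
  (hc : compatible Gs M) :
  trunc_set r M Gs = contr_set (ext r M) (ext_set r M Gs)
  /\ building_set (trunc r M) (trunc_set r M Gs).
Proof.
split.
- exact: (trunc_set_contr hr hl hG hM haf hc).
- exact: (trunc_building_set hr hl hG hM haf hc).
Qed.
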